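(* The abelian Lie superalgebra $A(m\mid n)$ is capable if and only if either $m=0,n=1$ or $m+n\ge 2$.
   Context: All algebras are over a field $\mathbb{F}$ of characteristic $\neq 2,3$. $A(m\mid n)$ denotes the abelian Lie superalgebra with even part of dimension $m$ and odd part of dimension $n$. A Lie superalgebra $L$ is capable if $L\cong H/Z(H)$ for some Lie superalgebra $H$, where $Z(H)$ is the center of $H$. *)

From HB Require Import structures.
From mathcomp Require Import all_boot all_order all_algebra.
Set Implicit Arguments. Unset Strict Implicit. Unset Printing Implicit Defensive.
Import GRing.Theory.
Local Open Scope ring_scope.

Record superdata (F : fieldType) := SuperData {
  sd_even : lmodType F;
  sd_odd  : lmodType F;
  sd_br   : (sd_even * sd_odd)%type -> (sd_even * sd_odd)%type ->
            (sd_even * sd_odd)%type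
}.

Definition sd_car (F : fieldType) (L : superdata F) : lmodType F :=
  (sd_even L * sd_odd L)%type.

(* homogeneous of parity a (false = even, true = odd) *)
Definition homog (F : fieldType) (L : superdata F) (a : bool) (x : sd_car L) : Prop :=
  if a then x.1 = 0 else x.2 = 0.

Definition ssign (F : fieldType) (b : bool) : F := if b then -1 else 1.

Definition is_lie_super (F : fieldType) (L : superdata F) : Prop :=
  let br := @sd_br F L in
  (forall (c : F) (x y z : sd_car L), br (c *: x + y) z = c *: br x z + br y z) /\
  (forall (c : F) (x y z : sd_car L), br x (c *: y + z) = c *: br x y + br x z) /\
  (forall (a b : bool) (x y : sd_car L), homog a x -> homog b y ->
      homog (a (+) b) (br x y)) /\
  (forall (a b : bool) (x y : sd_car L), homog a x -> homog b y ->
      br x y = - (ssign F (a && b) *: br y x)) /\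
  (forall (a b c : bool) (x y z : sd_car L), homog a x -> homog b y -> homog c z ->
      ssign F (a && c) *: br x (br y z) + ssign F (b && a) *: br y (br z x)
      + ssign F (c && b) *: br z (br x y) = 0).

Definition in_center (F : fieldType) (H : superdata F) (z : sd_car H) : Prop :=
  forall y : sd_car H, sd_br z y = 0.

Definition is_super_hom (F : fieldType) (H L : superdata F)
    (f : sd_car H -> sd_car L) : Prop :=
  (forall (c : F) (x y : sd_car H), f (c *: x + y) = c *: f x + f y) /\
  (forall (a : bool) (x : sd_car H), homog a x -> homog a (f x)) /\
  (forall x y : sd_car H, f (sd_br x y) = sd_br (f x) (f y)).

(* L is capable iff L ≅ H / Z(H) for some Lie superalgebra H, i.e. there is a
   surjective homomorphism H -> L whose kernel is exactly Z(H). *)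
Definition capable (F : fieldType) (L : superdata F) : Prop :=
  exists (H : superdata F) (f : sd_car H -> sd_car L),
    is_lie_super H /\ is_super_hom f /\
    (forall y : sd_car L, exists x : sd_car H, f x = y) /\
    (forall x : sd_car H, f x = 0 <-> in_center x).

Definition abelianA (F : fieldType) (m n : nat) : superdata F :=
  @SuperData F 'rV[F]_m 'rV[F]_n (fun _ _ => 0).

From HB Require Import structures.
From mathcomp Require Import all_boot all_order all_algebra.
From mathcomp Require Import zify.
Set Implicit Arguments. Unset Strict Implicit. Unset Printing Implicit Defensive.
Import GRing.Theory.
Local Open Scope ring_scope.

(* A(m|n) is the quotient by its centre of its free two-step nilpotent cover:
   adjoin to F^m + F^n the spaces of formal brackets Λ²F^m, S²F^n (even) and
   F^m ⊗ F^n (odd).  All double brackets vanish, so Jacobi is free, and in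
   characteristic <> 2 the centre is exactly the bracket part unless the
   bracket of generators is degenerate, which happens only for A(1|0).  That
   exception is genuine: if H/Z(H) is spanned by the image of one even x, then
   H = Fx + Z(H) and [x,x] = 0 make x central. *)

Lemma add_pairE (U V : zmodType) (a a' : U) (b b' : V) :
  ((a, b) : (U * V)%type) + (a', b') = (a + a', b + b').
Proof. by []. Qed.

Lemma opp_pairE (U V : zmodType) (a : U) (b : V) :
  - ((a, b) : (U * V)%type) = (- a, - b).
Proof. by []. Qed.

Lemma scale_pairE (F : fieldType) (U V : lmodType F) (c : F) (a : U) (b : V) :
  c *: ((a, b) : (U * V)%type) = (c *: a, c *: b).
Proof. by []. Qed.

Section SuperalgebraFacts.
Variables (F : fieldType) (H : superdata F).
Local Notation br := (@sd_br F H).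

Lemma is_lie_super_of_brbr0 :
  (forall c (x y z : sd_car H), br (c *: x + y) z = c *: br x z + br y z) ->
  (forall c (x y z : sd_car H), br x (c *: y + z) = c *: br x y + br x z) ->
  (forall a b (x y : sd_car H), homog a x -> homog b y -> homog (a (+) b) (br x y)) ->
  (forall a b (x y : sd_car H), homog a x -> homog b y ->
     br x y = - (ssign F (a && b) *: br y x)) ->
  (forall x y z : sd_car H, br x (br y z) = 0) ->
  is_lie_super H.
Proof.
move=> linl linr grad skew brbr0; do 4!split=> //.
by move=> *; rewrite !brbr0 !scaler0 !addr0.
Qed.

Hypothesis lieH : is_lie_super H.

Lemma homog_split (u : sd_even H) (v : sd_odd H) :
  ((u, v) : sd_car H) = 1 *: ((u, 0) : sd_car H) + (0, v) /\
  homog false ((u, 0) : sd_car H) /\ homog true ((0, v) : sd_car H).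
Proof. by rewrite scale1r add_pairE addr0 add0r. Qed.

Lemma in_center_of_brl0 a (x : sd_car H) :
  homog a x -> (forall y, br y x = 0) -> in_center x.
Proof.
case: lieH => _ [linr [_ [skew _]]] hx brl0 y.
case: y => u v; have [-> [h0 h1]] := homog_split u v.
rewrite linr (skew _ _ _ _ hx h0) (skew _ _ _ _ hx h1) !brl0.
by rewrite !scaler0 !oppr0 scaler0 addr0.
Qed.

Lemma br_even_self0 (x : sd_car H) :
  (2%:R : F) != 0 -> homog false x -> br x x = 0.
Proof.
case: lieH => _ [_ [_ [skew _]]] h2 hx.
have := skew _ _ _ _ hx hx; rewrite /ssign /= scale1r => /eqP.
rewrite -subr_eq0 opprK -mulr2n -scaler_nat scaler_eq0 (negbTE h2) /=.
exact: eqP.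
Qed.

End SuperalgebraFacts.

Lemma not_capable_abelianA10 (F : fieldType) :
  (2%:R : F) != 0 -> ~ capable (abelianA F 1 0).
Proof.
move=> h2 [H [f [lieH [[flin [fgrad _]] [fsurj fker]]]]].
pose e : sd_car (abelianA F 1 0) := (const_mx 1, 0).
have [[u v] fuv] := fsurj e.
pose x0 : sd_car H := (u, 0).
have [uv [hx0 hv]] := homog_split u v.
have fx0 : f x0 = e.
  have : (f (u, v)).1 = (f x0).1 + (f (0, v)).1 by rewrite uv flin scale1r.
  rewrite fuv (fgrad true _ hv) addr0 => e1.
  by rewrite [f x0]surjective_pairing -e1 [_.2]thinmx0.
have brl0 y : sd_br y x0 = 0.
  pose c := (f y).1 0 0.
  have : f ((- c) *: x0 + y) = 0.
    rewrite flin fx0 [f y]surjective_pairing scale_pairE add_pairE thinmx0.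
    by congr pair; apply/rowP => i; rewrite !mxE ord1 mulr1 addNr.
  have [linl _] := lieH; move/(fker _)/(_ x0).
  by rewrite linl (br_even_self0 lieH h2 hx0) scaler0 add0r.
have := (fker x0).2 (in_center_of_brl0 lieH hx0 brl0).
rewrite fx0 => /(congr1 (fun w : sd_car (abelianA F 1 0) => w.1 0 0)).
by rewrite !mxE => /eqP; rewrite oner_eq0.
Qed.

Section Cover.
Variables (F : fieldType) (m n : nat).

Definition cover_even := ('rV[F]_m * ('M[F]_m * 'M[F]_n))%type.
Definition cover_odd := ('rV[F]_n * 'M[F]_(m, n))%type.

(* u^T u' - u'^T u encodes u ∧ u', v^T v' + v'^T v encodes v ⊙ v', and
   u^T v' - u'^T v the even-odd bracket, as matrices. *)
Definition cover_br (x y : cover_even * cover_odd) : cover_even * cover_odd :=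
  ((0, (x.1.1^T *m y.1.1 - y.1.1^T *m x.1.1, x.2.1^T *m y.2.1 + y.2.1^T *m x.2.1)),
   (0, x.1.1^T *m y.2.1 - y.1.1^T *m x.2.1)).

Definition cover := @SuperData F cover_even cover_odd cover_br.

Definition cover_proj (x : sd_car cover) : sd_car (abelianA F m n) := (x.1.1, x.2.1).

Lemma cover_brDl c (x y z : sd_car cover) :
  cover_br (c *: x + y) z = c *: cover_br x z + cover_br y z.
Proof.
rewrite /cover_br /= !linearD !linearZ /= !mulmxDl -!scalemxAl.
rewrite !scale_pairE !add_pairE !scaler0 !addr0.
by congr (_, (_, _), (_, _)); rewrite ?scalerDr ?scalerN addrACA.
Qed.

Lemma cover_brDr c (x y z : sd_car cover) :
  cover_br x (c *: y + z) = c *: cover_br x y + cover_br x z.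
Proof.
rewrite /cover_br /= !linearD !linearZ /= ?mulmxDl ?mulmxDr -?scalemxAl -?scalemxAr.
rewrite !scale_pairE !add_pairE !scaler0 !addr0.
by congr (_, (_, _), (_, _)); rewrite ?scalerDr ?scalerN ?opprD addrACA.
Qed.

Lemma cover_br_proj0l (x y : sd_car cover) : cover_proj x = 0 -> cover_br x y = 0.
Proof.
move=> h; rewrite /cover_br (congr1 fst h : x.1.1 = 0) (congr1 snd h : x.2.1 = 0).
by rewrite !trmx0 !mul0mx !mulmx0 !subrr addr0.
Qed.

Lemma cover_br_proj0r (x y : sd_car cover) : cover_proj y = 0 -> cover_br x y = 0.
Proof.
move=> h; rewrite /cover_br (congr1 fst h : y.1.1 = 0) (congr1 snd h : y.2.1 = 0).
by rewrite !trmx0 !mul0mx !mulmx0 !subrr addr0.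
Qed.

Lemma cover_br_homog a b (x y : sd_car cover) :
  homog a x -> homog b y -> homog (a (+) b) (cover_br x y : sd_car cover).
Proof.
by case: a b => [] [] /=; rewrite /homog /= => hx hy; rewrite /cover_br hx hy /=
  ?trmx0 ?mulmx0 ?mul0mx ?subrr ?addr0 ?subr0.
Qed.

Lemma cover_br_skew a b (x y : sd_car cover) : homog a x -> homog b y ->
  cover_br x y = - (ssign F (a && b) *: (cover_br y x : sd_car cover)).
Proof.
case: a b => [] [] /=; rewrite /homog /ssign /= => hx hy; rewrite /cover_br hx hy /=
  ?trmx0 ?mulmx0 ?mul0mx ?subrr ?addr0 ?add0r ?subr0 ?sub0r
  ?scale_pairE ?opp_pairE ?scaler0 ?oppr0 ?scale1r ?scaleN1r ?opprK ?opprB //.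
by rewrite addrC.
Qed.

Lemma cover_lie : is_lie_super cover.
Proof.
apply: is_lie_super_of_brbr0.
- exact: cover_brDl.
- exact: cover_brDr.
- exact: cover_br_homog.
- exact: cover_br_skew.
- by move=> x y z; apply: cover_br_proj0r.
Qed.

Lemma cover_proj_hom : is_super_hom cover_proj.
Proof. by split=> //; split=> // -[] x hx; rewrite /homog /= (congr1 fst hx). Qed.

Lemma cover_center_odd (x : sd_car cover) :
  (2%:R : F) != 0 -> in_center x -> x.2.1 = 0.
Proof.
move=> h2 /(_ x) /(congr1 (fun w : sd_car cover => w.1.2.2)) /= hxx.
apply/rowP => i; have /eqP := congr1 (fun M : 'M[F]_n => M i i) hxx.
by rewrite !mxE !big_ord1 !mxE -mulr2n -mulr_natr !mulf_eq0 (negbTE h2) orbF orbb => /eqP.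
Qed.

Lemma cover_center_even (x : sd_car cover) :
  (0 < n)%N || (1 < m)%N -> in_center x -> x.1.1 = 0.
Proof.
case/orP=> [n_gt0|m_gt1] xZ; apply/rowP => i; rewrite [RHS]mxE.
  pose j := Ordinal n_gt0.
  have := congr1 (fun w : sd_car cover => w.2.2 i j) (xZ ((0, 0), (delta_mx 0 j, 0))).
  by rewrite /= !mxE !big_ord1 !mxE eqxx mulr1 mul0r subr0.
have j_lt : ((val i == 0%N) < m)%N by case: (val i == 0%N) => //; apply: leq_trans m_gt1.
pose j := Ordinal j_lt.
have ij : (i == j) = false by apply/negbTE; rewrite -val_eqE /=; case: (val i) => [|[]].
have := congr1 (fun w : sd_car cover => w.1.2.1 i j) (xZ ((delta_mx 0 j, 0), 0)).
by rewrite /= !mxE !big_ord1 !mxE eqxx ij mulr1 mul0r subr0.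
Qed.

End Cover.

Lemma capable_abelianA (F : fieldType) (m n : nat) :
  (2%:R : F) != 0 -> (0 < n)%N || (1 < m)%N -> capable (abelianA F m n).
Proof.
move=> h2 mn; exists (cover F m n), (@cover_proj F m n).
split; first exact: cover_lie.
split; first exact: cover_proj_hom.
split; first by case=> u v; exists ((u, 0), (v, 0)).
move=> x; split; first by move=> x0 y; apply: cover_br_proj0l.
by move=> xZ; rewrite /cover_proj (cover_center_even mn xZ) (cover_center_odd h2 xZ).
Qed.

Theorem mainTheorem2 (F : fieldType)
  (hF2 : (2 \notin [pchar F]%R)%N) (hF3 : (3 \notin [pchar F]%R)%N)
  (m n : nat) (hmn : (0 < m + n)%N) :
  capable (abelianA F m n) <-> ((m == 0) && (n == 1) \/ 2 <= m + n)%N.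
Proof.
have h2 : (2%:R : F) != 0 by move: hF2; rewrite inE.
split=> [capA | mn].
  move: hmn capA; case: m n => [|[|m]] [|[|n]] //= _; try by [left | right].
  by move/(not_capable_abelianA10 h2).
by apply: capable_abelianA h2 _; lia.
Qed.
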